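(* The graphs $P_4+P_3$ and $2P_2+C_3$ are of class $\mathcal C_1$.
   Context: All graphs are finite, simple and undirected. $C_n$ and $P_n$ denote the cycle and the path on $n$ vertices; $kG$ denotes the disjoint union of $k$ copies of $G$. The join $G+H$ is obtained from vertex-disjoint copies of $G$ and $H$ by adding all edges between $V(G)$ and $V(H)$. A drawing is 1-planar if each edge is crossed at most once (adjacent edges never cross, no edge crosses itself); a graph is 1-planar if it has such a drawing. For a 1-planar drawing $D$, $D^\times$ is the plane graph obtained by turning each crossing into a new degree-4 vertex (a false vertex); $N_{D^\times}(c)$ is the neighbour set of a false vertex $c$. A 1-planar graph is of class $\mathcal C_0$ if it has a 1-planar drawing with $|N_{D^\times}(c_1)\cap N_{D^\times}(c_2)|=0$ for all distinct false vertices; it is of class $\mathcal C_1$ if it is not of class $\mathcal C_0$ and it has a 1-planar drawing with $|N_{D^\times}(c_1)\cap N_{D^\times}(c_2)|\le 1$ for all distinct false vertices $c_1,c_2$. *)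

From mathcomp Require Import all_boot perm.
Set Implicit Arguments. Unset Strict Implicit. Unset Printing Implicit Defensive.

Definition path_rel (n : nat) : rel 'I_n :=
  fun i j => (i.+1 == j :> nat) || (j.+1 == i :> nat).

Definition cycle_rel (n : nat) : rel 'I_n :=
  fun i j => (i != j) && ((i.+1 %% n == j :> nat) || (j.+1 %% n == i :> nat)).

Definition dunion (A B : finType) (e1 : rel A) (e2 : rel B) : rel (A + B) :=
  fun x y => match x, y with
  | inl u, inl v => e1 u v
  | inr u, inr v => e2 u v
  | _, _ => false
  end.

Definition gjoin (A B : finType) (e1 : rel A) (e2 : rel B) : rel (A + B) :=
  fun x y => match x, y with
  | inl u, inl v => e1 u v
  | inr u, inr v => e2 u v
  | _, _ => true
  end.

Definition dart_rev (T : Type) (p : T * T) : T * T := (p.2, p.1).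

Definition darts (T : finType) (e : rel T) : {set T * T} := [set p | e p.1 p.2].

Definition nonisolated (T : finType) (e : rel T) : {set T} :=
  [set x | [exists y, e x y]].

Definition nfaces (T : finType) (e : rel T) (s : {perm T * T}) : nat :=
  #|[set [set q in darts e | fconnect (fun p => s (dart_rev p)) p q]
      | p in darts e]|.

Definition map_step (T : finType) (s : {perm T * T}) : rel (T * T) :=
  fun p q => (q == s p) || (q == dart_rev p).

Definition ncomps (T : finType) (e : rel T) (s : {perm T * T}) : nat :=
  #|[set [set q in darts e | connect (map_step s) p q] | p in darts e]|.

(* s is a rotation system of e (cyclic order of the darts at every vertex)
   all of whose components have genus 0 (Euler: V - E + F = 2 per component). *)
Definition plane_rotation (T : finType) (e : rel T) (s : {perm T * T}) : Prop :=
  [/\ forall p, ~~ e p.1 p.2 -> s p = p,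
      forall p, (s p).1 = p.1,
      forall p q, p \in darts e -> q \in darts e -> p.1 = q.1 -> fconnect s p q &
      2 * #|nonisolated e| + 2 * nfaces e s = #|darts e| + 4 * ncomps e s].

Definition planar (T : finType) (e : rel T) : Prop := exists s, plane_rotation e s.

(* ---------- 1-planar drawings, described by their crossings.
   A drawing with k crossings: crossing i is the crossing of edge {a i, b i}
   with edge {c i, d i}.  D^x is the planarization. *)

Definition falseN (V : finType) k (a b c d : 'I_k -> V) (i : 'I_k) : {set V} :=
  [set a i; b i; c i; d i].

Definition crossed_edges (V : finType) k (a b c d : 'I_k -> V) : seq {set V} :=
  flatten [seq [:: [set a i; b i]; [set c i; d i]] | i <- enum 'I_k].

Definition planarization (V : finType) (e : rel V) k (a b c d : 'I_k -> V)
  : rel (V + 'I_k) :=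
  fun x y => match x, y with
  | inl u, inl v => e u v && ([set u; v] \notin crossed_edges a b c d)
  | inl u, inr i => u \in falseN a b c d i
  | inr i, inl u => u \in falseN a b c d i
  | inr _, inr _ => false
  end.

Definition one_planar_drawing (V : finType) (e : rel V) k (a b c d : 'I_k -> V)
  : Prop :=
  [/\ forall i, e (a i) (b i) && e (c i) (d i),
      forall i, uniq [:: a i; b i; c i; d i],
      uniq (crossed_edges a b c d) &
      planar (planarization e a b c d)].

Definition has_drawing_le (V : finType) (e : rel V) (m : nat) : Prop :=
  exists k (a b c d : 'I_k -> V), one_planar_drawing e a b c d /\
    forall i j, i != j -> #|falseN a b c d i :&: falseN a b c d j| <= m.

Definition class_C0 (V : finType) (e : rel V) : Prop := has_drawing_le e 0.

Definition class_C1 (V : finType) (e : rel V) : Prop :=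
  ~ class_C0 e /\ has_drawing_le e 1.

Arguments path_rel n : clear implicits.
Arguments cycle_rel n : clear implicits.

(* Both graphs have 7 vertices and 17 edges. In a drawing of class C0 the
   false vertices have pairwise disjoint 4-element neighbourhoods, so on 7
   vertices there is at most one crossing. Its planarization then has 7
   vertices and 17 edges, or 8 vertices and 19 edges, more than the 3n - 6
   edges allowed by Euler's formula (all faces have length at least 3).
   Conversely, each graph has a 1-planar drawing with two crossings sharing a
   single end vertex; its planarization is certified plane by an explicit
   rotation system satisfying Euler's formula. *)

From mathcomp Require Import all_boot perm zify.
From Stdlib Require Import FunctionalExtensionality.
Set Implicit Arguments. Unset Strict Implicit. Unset Printing Implicit Defensive.

Definition enumerates (T : finType) (s : seq T) := uniq s /\ forall x, x \in s.

Section Enumerations.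
Variables (T : finType) (s : seq T).
Hypothesis s_enum : enumerates s.

Lemma enumerates_card_count (A : {pred T}) : #|A| = count (mem A) s.
Proof.
case: s_enum => s_uniq s_full; rewrite -size_filter.
rewrite -(card_uniqP (filter_uniq _ s_uniq)).
by apply: eq_card => x; rewrite mem_filter s_full andbT.
Qed.

Lemma enumerates_card : #|T| = size s.
Proof. by rewrite (enumerates_card_count T) count_predT. Qed.

Lemma enumerates_allpairs : enumerates (allpairs pair s s).
Proof.
case: s_enum => s_uniq s_full; split; last by case=> x y; exact: allpairs_f.
by apply: allpairs_uniq => // -[? ?] [? ?].
Qed.

Lemma enumerates_uniq_map_inj (U : eqType) (f : T -> U) :
  uniq (map f s) -> injective f.
Proof.
case: s_enum => s_uniq s_full f_uniq; apply/injectiveP.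
have s_enumT : perm_eq s (enum T).
  by apply: uniq_perm; rewrite ?enum_uniq // => x; rewrite s_full mem_enum.
by rewrite /injectiveb /dinjectiveb -(perm_uniq (perm_map f s_enumT)).
Qed.

End Enumerations.

Lemma enumerates_sum (A B : finType) (sa : seq A) (sb : seq B) :
  enumerates sa -> enumerates sb -> enumerates (map inl sa ++ map inr sb).
Proof.
move=> [ua fa] [ub fb]; split; last by case=> x; rewrite mem_cat map_f ?orbT.
rewrite cat_uniq !map_inj_uniq ?ua ?ub => [|? ? []|? ? []] //=.
by rewrite andbT; apply/hasP => -[_ /mapP[? _ ->] /mapP[]].
Qed.

(* [insub] does not reduce under [vm_compute] because [idP] is opaque. *)
Definition ord_of_nat n m : option 'I_n :=
  (if m < n as b return (m < n) = b -> option 'I_n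
   then fun lt_mn => Some (Ordinal lt_mn) else fun _ => None) erefl.

Lemma ord_of_natE n m : ord_of_nat n m = insub m.
Proof.
rewrite /ord_of_nat; move: (@erefl _ (m < n)).
case: {2 3}(m < n) => lt_mn; first by rewrite insubT.
by rewrite insubF.
Qed.

Definition ord_list n : seq 'I_n := pmap (ord_of_nat n) (iota 0 n).

Lemma ord_listE n : ord_list n = ord_enum n.
Proof. by apply: eq_pmap => m; rewrite ord_of_natE. Qed.

Lemma enum_ord_list n : enum 'I_n = ord_list n.
Proof.
apply: (inj_map val_inj).
by rewrite val_enum_ord ord_listE -(val_enum_ord n) enumT unlock.
Qed.

Lemma enumerates_ord_list n : enumerates (ord_list n).
Proof. by rewrite ord_listE; split; [exact: ord_enum_uniq | exact: mem_ord_enum]. Qed.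

Lemma fconnect_traject (T : finType) (f : T -> T) n x y :
  #|T| <= n -> fconnect f x y = (y \in traject f x n).
Proof.
move=> card_le; apply/idP/trajectP => [xy|[i _ ->]]; last exact: fconnect_iter.
exists (findex f x y); last by rewrite iter_findex.
apply: leq_trans (findex_max xy) (leq_trans _ card_le).
by rewrite -size_orbit -(card_uniqP (orbit_uniq f x)) max_card.
Qed.

Lemma connect_symI (T : finType) (r : rel T) :
  (forall x y, r x y -> connect r y x) -> connect_sym r.
Proof.
move=> r_back; suff connect_back x y : connect r x y -> connect r y x.
  by move=> x y; apply/idP/idP; exact: connect_back.
case/connectP=> p; elim: p x => [|z p IHp] x /=; first by move=> _ ->.
by case/andP=> rxz /IHp zy /zy yz; exact: connect_trans yz (r_back _ _ rxz).
Qed.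

Definition reach (T : eqType) (next : T -> seq T) n (x : T) : seq T :=
  iter n (fun l => undup (l ++ flatten (map next l))) [:: x].

Lemma reach_connect (T : finType) (r : rel T) (next : T -> seq T) n x y :
  (forall u v, v \in next u -> r u v) -> y \in reach next n x -> connect r x y.
Proof.
move=> next_r; elim: n y => [|n IHn] y /=; first by rewrite inE => /eqP->.
rewrite mem_undup mem_cat => /orP[/IHn //|/flattenP[_ /mapP[z reach_z ->] z_y]].
exact: connect_trans (IHn _ reach_z) (connect1 (next_r _ _ z_y)).
Qed.

Lemma card_classes_count (T : finType) (D : {set T}) (R : rel T) (s : seq T) :
  enumerates s -> {in D & &, equivalence_rel R} ->
  #|[set [set y in D | R x y] | x in D]| =
  count (fun x => (x \in D) &&
    all (fun y => (y \in D) ==> R x y ==> (index x s <= index y s)) s) s.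
Proof.
move=> s_enum R_eq; have [_ s_full] := s_enum.
have Rxx x : x \in D -> R x x by move=> Dx; exact: (R_eq x x x Dx Dx Dx).1.
have R_trans x y z : x \in D -> y \in D -> z \in D -> R x y -> R y z -> R x z.
  by move=> Dx Dy Dz Rxy; rewrite (R_eq x y z Dx Dy Dz).2.
have R_sym x y : x \in D -> y \in D -> R x y -> R y x.
  by move=> Dx Dy Rxy; rewrite -(R_eq x y x Dx Dy Dx).2 // Rxx.
pose first x := (x \in D) &&
  all (fun y => (y \in D) ==> R x y ==> (index x s <= index y s)) s.
transitivity #|[set x | first x]|; last first.
  by rewrite (enumerates_card_count s_enum); apply: eq_count => x; rewrite /= inE.
have -> : [set [set y in D | R x y] | x in D] =
          (fun x => [set y in D | R x y]) @: [set x | first x].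
  apply/setP=> A; apply/imsetP/imsetP => -[x Dx ->]; last first.
    by move: Dx; rewrite inE => /andP[Dx _]; exists x.
  have DRxx : (x \in D) && R x x by rewrite Dx Rxx.
  case: (@arg_minnP _ x (fun y => (y \in D) && R x y) (index^~ s) DRxx).
  move=> y /andP[Dy Rxy] y_min; exists y.
    rewrite inE /first Dy; apply/allP=> z _; apply/implyP=> Dz; apply/implyP=> Ryz.
    by apply: y_min; rewrite Dz (R_trans x y z).
  apply/setP=> z; rewrite !inE; case Dz: (z \in D) => //=.
  by rewrite (R_eq x y z Dx Dy Dz).2.
rewrite card_in_imset // => x y; rewrite !inE => /andP[Dx /allP x_min].
case/andP=> Dy /allP y_min cls_xy.
have Rxy : R x y.
  have : y \in [set z in D | R y z] by rewrite inE Dy Rxx.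
  by rewrite -cls_xy inE => /andP[].
have := x_min y (s_full y); have := y_min x (s_full x).
rewrite Dx Dy Rxy (R_sym x y) //= => le_yx le_xy.
rewrite -(nth_index x (s_full x)) -(nth_index x (s_full y)).
by congr nth; apply/eqP; rewrite eqn_leq le_xy.
Qed.

Lemma face_step_sym (T : finType) (s : {perm T * T}) :
  connect_sym (frel (fun p => s (dart_rev p))).
Proof.
have rev_inv : involutive (@dart_rev T) by case.
by apply: fconnect_sym => p q /perm_inj /(inv_inj rev_inv).
Qed.

Section PlaneMap.
Variables (T : finType) (e : rel T) (s : {perm T * T}).
Hypotheses (e_sym : symmetric e) (e_irr : irreflexive e).
Hypothesis e_deg2 : forall x y, e x y -> exists2 z, z != y & e x z.
Hypothesis s_plane : plane_rotation e s.

Local Notation D := (darts e).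
Local Notation face_step := (fun p => s (dart_rev p)).

Lemma dartsE p : (p \in D) = e p.1 p.2.
Proof. by rewrite inE. Qed.

Lemma rotation_dart p : p \in D -> s p \in D.
Proof.
have [s_fix _ _ _] := s_plane => Dp; apply: contraT => Dsp.
have /perm_inj s_p : s (s p) = s p by apply: s_fix; rewrite -dartsE.
by rewrite s_p Dp in Dsp.
Qed.

Lemma face_step_dart p : p \in D -> face_step p \in D.
Proof. by move=> Dp; apply: rotation_dart; rewrite dartsE e_sym -dartsE. Qed.

Lemma face_step_fst p : (s (dart_rev p)).1 = p.2.
Proof. by have [_ s_fst _ _] := s_plane; rewrite s_fst. Qed.

Lemma loopless_dart p : p \in D -> p.1 != p.2.
Proof. by rewrite dartsE; apply: contraTneq => ->; rewrite e_irr. Qed.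

(* A face of length 2 forces a vertex of degree 1. *)
Lemma face_step2_neq p : p \in D -> face_step (face_step p) != p.
Proof.
have [_ _ s_rot _] := s_plane => Dp; apply/eqP=> face2_p.
have face1_rev : face_step p = dart_rev p.
  rewrite [s (dart_rev p)]surjective_pairing face_step_fst; congr (_, _).
  by rewrite -(congr1 fst face2_p) face_step_fst.
have s_fixed : s p = p by rewrite -[in RHS]face2_p face1_rev; case: (p).
have [z neq_z e_z] : exists2 z, z != p.2 & e p.1 z by apply: e_deg2; rewrite -dartsE.
have Dz : (p.1, z) \in D by rewrite dartsE.
have /iter_findex := s_rot p (p.1, z) Dp Dz erefl.
by rewrite iter_fix // => /(congr1 snd) /= p2_z; rewrite p2_z eqxx in neq_z.
Qed.

Lemma face_card_ge3 p : p \in D -> 3 <= #|[set q in D | fconnect face_step p q]|.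
Proof.
move=> Dp; set q1 := face_step p; set q2 := face_step q1.
have Dq1 : q1 \in D by exact: face_step_dart.
have Dq2 : q2 \in D by exact: face_step_dart.
have neq_p_q1 : p != q1.
  by apply: contraNneq (loopless_dart Dp) => {1}->; rewrite /q1 face_step_fst.
have neq_q1_q2 : q1 != q2.
  by apply: contraNneq (loopless_dart Dq1) => {1}->; rewrite /q2 face_step_fst.
have neq_p_q2 : p != q2 by rewrite eq_sym face_step2_neq.
have <- : #|[:: p; q1; q2]| = 3.
  by apply/card_uniqP; rewrite /= !inE negb_or neq_p_q1 neq_p_q2 neq_q1_q2.
apply/subset_leq_card/subsetP => q; rewrite !inE.
case/or3P=> /eqP->; rewrite -dartsE ?Dp ?Dq1 ?Dq2 /=.
- exact: connect0.
- exact: fconnect1.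
- exact: (fconnect_iter _ 2).
Qed.

Lemma nfaces_le_darts : 3 * nfaces e s <= #|D|.
Proof.
have face_sym := face_step_sym s.
have faces_part : partition (equivalence_partition (fconnect face_step) D) D.
  apply: equivalence_partitionP => p q r _ _ _; split; first exact: connect0.
  by move=> pq; rewrite (same_connect face_sym pq).
rewrite (card_partition faces_part) mulnC -sum_nat_const.
by apply: leq_sum => _ /imsetP[p Dp ->]; exact: face_card_ge3.
Qed.

Lemma plane_darts_bound p : p \in D -> #|D| + 12 <= 6 * #|nonisolated e|.
Proof.
have [_ _ _ euler] := s_plane => Dp.
have comps_gt0 : 0 < ncomps e s.
  by apply/card_gt0P; exists [set q in D | connect (map_step s) p q]; exact: imset_f.
have := nfaces_le_darts; lia.
Qed.

End PlaneMap.

Lemma connect_map_step_sym (T : finType) (s : {perm T * T}) :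
  connect_sym (map_step s).
Proof.
apply: connect_symI => p q /orP[]/eqP->; last first.
  by apply: connect1; rewrite /map_step; case: p => /= *; rewrite eqxx orbT.
have s_back : fconnect s (s p) p by rewrite fconnect_sym ?fconnect1 //; exact: perm_inj.
by apply: connect_sub s_back => u _ /eqP<-; apply: connect1; rewrite /map_step eqxx.
Qed.

Lemma ncomps_eq1 (T : finType) (e : rel T) (s : {perm T * T}) p0 :
  p0 \in darts e -> {in darts e, forall q, connect (map_step s) p0 q} ->
  ncomps e s = 1.
Proof.
move=> D_p0 p0_conn; apply/eqP/cards1P.
exists [set q in darts e | connect (map_step s) p0 q].
apply/setP=> A; rewrite inE; apply/imsetP/eqP=> [[p Dp ->]|->]; last by exists p0.
apply/setP=> q; rewrite !inE; congr (_ && _).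
by rewrite (same_connect (connect_map_step_sym s) (p0_conn p Dp)).
Qed.

(* [f] is a rotation system (a permutation of the darts, cyclic at each vertex)
   whose map is connected and satisfies Euler's formula V - E + F = 2; each face
   is counted once, by its first dart in [L]. *)
Definition plane_certificate (T : finType) (e : rel T) (l : seq T)
    (f : T * T -> T * T) : bool :=
  let L := allpairs pair l l in
  let N := size L in
  let D := [seq p <- L | e p.1 p.2] in
  let first_of_face p := all (fun q =>
    (q \in traject (fun r => f (dart_rev r)) p N) ==> (index p L <= index q L)) D in
  [&& uniq (map f L),
      all (fun p => f p == p) [seq p <- L | ~~ e p.1 p.2],
      all (fun p => (f p).1 == p.1) L,
      all (fun p => all (fun q => (q.1 == p.1) ==> (q \in traject f p N)) D) D,
      if D is p0 :: _ then all (mem (reach (fun p => [:: f p; dart_rev p]) N p0)) D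
      else false &
      2 * count (fun x => has (e x) l) l + 2 * count first_of_face D == size D + 4].

Section PlaneCertificate.
Variables (T : finType) (e : rel T) (l : seq T).
Hypothesis l_enum : enumerates l.
Local Notation L := (allpairs pair l l).
Local Notation D := [seq p <- L | e p.1 p.2].

Lemma card_nonisolated_count : #|nonisolated e| = count (fun x => has (e x) l) l.
Proof.
rewrite (enumerates_card_count l_enum); apply: eq_count => x; rewrite /= inE.
by apply/existsP/hasP=> [[y exy]|[y _ exy]]; exists y => //; exact: l_enum.2.
Qed.

Lemma card_darts_count : #|darts e| = size D.
Proof.
rewrite size_filter (enumerates_card_count (enumerates_allpairs l_enum)).
by apply: eq_count => p; rewrite /= inE.
Qed.

Section Rotation.
Variables (f : T * T -> T * T) (f_inj : injective f).
Local Notation s := (perm f_inj).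

Let sE : s =1 f := permE f_inj.
Let inD p : (p \in D) = e p.1 p.2.
Proof. by rewrite mem_filter (enumerates_allpairs l_enum).2 andbT. Qed.
Let card_le : #|{: T * T}| <= size L.
Proof. by rewrite (enumerates_card (enumerates_allpairs l_enum)). Qed.

Lemma ncomps_reach p0 : p0 \in D ->
  all (mem (reach (fun p => [:: f p; dart_rev p]) (size L) p0)) D -> ncomps e s = 1.
Proof.
move=> D_p0 /allP p0_reach; apply: (ncomps_eq1 (p0 := p0)); first by rewrite inE -inD.
move=> q; rewrite inE -inD => /p0_reach; apply: reach_connect => u v.
by rewrite /map_step sE !inE.
Qed.

Lemma nfaces_count : nfaces e s = count (fun p => all (fun q =>
  (q \in traject (fun r => f (dart_rev r)) p (size L)) ==> (index p L <= index q L)) D) D.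
Proof.
set face_traj := fun p => traject (fun r => f (dart_rev r)) p (size L).
have face_trajE p q :
    fconnect (fun r => s (dart_rev r)) p q = (q \in face_traj p).
  rewrite -(fconnect_traject _ _ _ card_le).
  by apply: eq_fconnect => r; rewrite sE.
have -> : nfaces e s =
          #|[set [set q in darts e | q \in face_traj p] | p in darts e]|.
  by rewrite /nfaces; congr #|pred_of_set _|; apply: eq_imset => p;
     apply/setP => q; rewrite !inE face_trajE.
rewrite (card_classes_count (enumerates_allpairs l_enum)); last first.
  move=> p q r _ _ _; rewrite -!face_trajE; split; first exact: connect0.
  by move=> pq; rewrite (same_connect (face_step_sym _) pq).
rewrite count_filter; apply: eq_count => p.
rewrite /= inE andbC all_filter; congr (_ && _).
by apply: eq_all => q; rewrite /= inE.
Qed.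

Lemma plane_rotation_perm : plane_certificate e l f -> plane_rotation e s.
Proof.
case/and5P=> _ f_fix f_fst f_rot /andP[f_conn euler].
have [_ L_full] := enumerates_allpairs l_enum; split.
- move=> p not_ep; rewrite sE; apply/eqP; apply: (allP f_fix).
  by rewrite mem_filter not_ep L_full.
- by move=> p; rewrite sE; apply/eqP; exact: (allP f_fst).
- move=> p q; rewrite !inE -!inD => Dp Dq pq.
  rewrite (eq_fconnect sE) (fconnect_traject _ _ _ card_le).
  by have := allP (allP f_rot p Dp) q Dq; rewrite pq eqxx.
case D_def : D f_conn => [//|p0 D'] p0_reach.
have D_p0 : p0 \in D by rewrite D_def mem_head.
have -> : ncomps e s = 1 by apply: (ncomps_reach D_p0); rewrite D_def.
by rewrite card_nonisolated_count card_darts_count nfaces_count muln1 -(eqP euler).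
Qed.

End Rotation.

Lemma plane_certificateP f : plane_certificate e l f -> planar e.
Proof.
move=> cert; have /and5P[f_uniq _ _ _ _] := cert.
have f_inj := enumerates_uniq_map_inj (enumerates_allpairs l_enum) f_uniq.
by exists (perm f_inj); exact: plane_rotation_perm.
Qed.

End PlaneCertificate.

(* A nonempty simple graph without vertices of degree 1 and with more than
   3|V| - 6 edges. *)
Definition euler_violation (T : finType) (r : rel T) (l : seq T) : bool :=
  let L := allpairs pair l l in
  [&& all (fun x => all (fun y => r x y == r y x) l) l,
      all (fun x => ~~ r x x) l,
      all (fun x => all (fun y => r x y ==> has (fun z => (z != y) && r x z) l) l) l,
      has (fun p => r p.1 p.2) L &
      6 * size l < count (fun p => r p.1 p.2) L + 12].

Lemma euler_violation_not_planar (T : finType) (r : rel T) (l : seq T) :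
  enumerates l -> euler_violation r l -> ~ planar r.
Proof.
move=> l_enum /and5P[r_sym r_irr r_deg2 /hasP[p0 _ r_p0] dense] [s s_plane].
have [_ l_full] := l_enum.
have r_sym' : symmetric r.
  by move=> x y; apply/eqP; exact: allP (allP r_sym x (l_full x)) y (l_full y).
have r_irr' : irreflexive r by move=> x; apply/negbTE; exact: allP r_irr x (l_full x).
have r_deg2' x y : r x y -> exists2 z, z != y & r x z.
  move=> rxy; have := allP (allP r_deg2 x (l_full x)) y (l_full y).
  by rewrite rxy => /hasP[z _ /andP[]]; exists z.
have D_p0 : p0 \in darts r by rewrite inE.
have := plane_darts_bound r_sym' r_irr' r_deg2' s_plane D_p0.
rewrite (card_darts_count _ l_enum) size_filter.
have : #|nonisolated r| <= size l by rewrite -(enumerates_card l_enum) max_card.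
lia.
Qed.

Definition upair_eq (V : eqType) (u v x y : V) :=
  ((u == x) && (v == y)) || ((u == y) && (v == x)).

Lemma set2_eqE (V : finType) (u v x y : V) :
  ([set u; v] == [set x; y]) = upair_eq u v x y.
Proof.
apply/eqP/idP => [uv_xy|]; last first.
  by case/orP=> /andP[/eqP-> /eqP->]; rewrite // setUC.
have : u \in [set x; y] by rewrite -uv_xy set21.
have : v \in [set x; y] by rewrite -uv_xy set22.
have : x \in [set u; v] by rewrite uv_xy set21.
have : y \in [set u; v] by rewrite uv_xy set22.
rewrite !inE /upair_eq.
by do 4 case/orP=> /eqP ?; subst; rewrite ?eqxx ?orbT.
Qed.

Section Planarization.
Variables (V : finType) (e : rel V) (k : nat) (a b c d : 'I_k -> V).

Definition planarization_comp : rel (V + 'I_k) :=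
  fun x y => match x, y with
  | inl u, inl v => e u v &&
      ~~ has (fun i => upair_eq u v (a i) (b i) || upair_eq u v (c i) (d i)) (ord_list k)
  | inl u, inr i | inr i, inl u => u \in [:: a i; b i; c i; d i]
  | inr _, inr _ => false
  end.

Definition crossed_pairs : seq (V * V) :=
  flatten [seq [:: (a i, b i); (c i, d i)] | i <- ord_list k].

Lemma crossed_edgesE : crossed_edges a b c d = [seq [set p.1; p.2] | p <- crossed_pairs].
Proof. by rewrite /crossed_edges enum_ord_list map_flatten -map_comp. Qed.

Lemma planarizationE : planarization e a b c d =2 planarization_comp.
Proof.
case=> u [] v //=; rewrite ?inE -?orbA //; congr (_ && ~~ _).
have ord_full := (enumerates_ord_list k).2.
rewrite crossed_edgesE /crossed_pairs; apply/mapP/hasP => [[p]|[i _]].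
  case/flattenP=> _ /mapP[i _ ->]; rewrite !inE => /orP[]/eqP-> /eqP uv_p;
  by exists i; rewrite // -!set2_eqE uv_p ?orbT.
case/orP; rewrite -set2_eqE => /eqP uv_i; [exists (a i, b i) | exists (c i, d i)] => //;
  by apply/flattenP; exists [:: (a i, b i); (c i, d i)]; rewrite ?inE ?eqxx ?orbT ?map_f.
Qed.

Lemma uniq_crossed_edges :
  uniq (crossed_edges a b c d) =
  pairwise (fun p q => ~~ upair_eq p.1 p.2 q.1 q.2) crossed_pairs.
Proof.
rewrite crossed_edgesE uniq_pairwise pairwise_map.
by apply: eq_pairwise => p q; rewrite /= set2_eqE.
Qed.

End Planarization.

Lemma eq_planar (T : finType) (e e' : rel T) : e =2 e' -> planar e -> planar e'.
Proof.
move=> ee'; suff -> : e = e' by [].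
by apply: functional_extensionality => x; apply: functional_extensionality; exact: ee'.
Qed.

Definition drawing_certificate (V : finType) (e : rel V) (lv : seq V) k
    (a b c d : 'I_k -> V) (f : (V + 'I_k) * (V + 'I_k) -> (V + 'I_k) * (V + 'I_k))
    (m : nat) : bool :=
  let ends i := [:: a i; b i; c i; d i] in
  [&& all (fun i => [&& e (a i) (b i), e (c i) (d i) & uniq (ends i)]) (ord_list k),
      pairwise (fun p q => ~~ upair_eq p.1 p.2 q.1 q.2) (crossed_pairs a b c d),
      plane_certificate (planarization_comp e a b c d)
        (map inl lv ++ map inr (ord_list k)) f &
      all (fun i => all (fun j => (i != j) ==>
        (count (fun x => (x \in ends i) && (x \in ends j)) lv <= m)) (ord_list k))
        (ord_list k)].

Lemma drawing_certificateP (V : finType) (e : rel V) (lv : seq V) k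
    (a b c d : 'I_k -> V) f m :
  enumerates lv -> drawing_certificate e lv a b c d f m -> has_drawing_le e m.
Proof.
move=> lv_enum /and4P[/allP crossings_ok crossed_uniq plane shared].
have ord_full := (enumerates_ord_list k).2.
exists k, a, b, c, d; split; first split.
- by move=> i; have /and3P[-> ->] := crossings_ok i (ord_full i).
- by move=> i; have /and3P[_ _] := crossings_ok i (ord_full i).
- by rewrite uniq_crossed_edges.
- apply: eq_planar (fun x y => esym (planarizationE e a b c d x y)) _.
  exact: plane_certificateP (enumerates_sum lv_enum (enumerates_ord_list k)) _ plane.
move=> i j neq_ij; rewrite (enumerates_card_count lv_enum).
have := allP (allP shared i (ord_full i)) j (ord_full j); rewrite neq_ij.
by congr (_ <= _); apply: eq_count => x; rewrite /= !inE -!orbA.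
Qed.

Lemma card_falseN (V : finType) k (a b c d : 'I_k -> V) i :
  uniq [:: a i; b i; c i; d i] -> #|falseN a b c d i| = 4.
Proof.
move/card_uniqP => /= <-; apply: eq_card => x.
by rewrite !inE -!orbA.
Qed.

Lemma disjoint_crossings_le1 (V : finType) k (a b c d : 'I_k -> V) :
  #|V| < 8 -> (forall i, uniq [:: a i; b i; c i; d i]) ->
  (forall i j, i != j -> #|falseN a b c d i :&: falseN a b c d j| <= 0) -> k <= 1.
Proof.
move=> card_V ends_uniq disjoint; rewrite leqNgt; apply/negP => k_gt1.
pose i0 : 'I_k := Ordinal (ltnW k_gt1); pose i1 : 'I_k := Ordinal k_gt1.
have := disjoint i0 i1 isT; have := cardsU (falseN a b c d i0) (falseN a b c d i1).
rewrite !card_falseN // => card_U card_I.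
have := max_card (falseN a b c d i0 :|: falseN a b c d i1).
lia.
Qed.

(* [v0] only fills the empty crossing functions of the drawing without crossings. *)
Definition not_C0_certificate (V : finType) (e : rel V) (lv : seq V) (v0 : V) : bool :=
  let crossing1 u v x y := planarization_comp e
    (fun _ : 'I_1 => u) (fun _ => v) (fun _ => x) (fun _ => y) in
  [&& size lv < 8,
      euler_violation (planarization_comp e (fun _ : 'I_0 => v0) (fun _ => v0)
         (fun _ => v0) (fun _ => v0)) (map inl lv ++ map inr (ord_list 0)) &
      all (fun u => all (fun v => all (fun x => all (fun y =>
        [&& e u v, e x y & uniq [:: u; v; x; y]] ==>
        euler_violation (crossing1 u v x y) (map inl lv ++ map inr (ord_list 1)))
        lv) lv) lv) lv].

Lemma not_C0_certificateP (V : finType) (e : rel V) (lv : seq V) (v0 : V) :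
  enumerates lv -> not_C0_certificate e lv v0 -> ~ class_C0 e.
Proof.
move=> lv_enum /and3P[small no_crossing one_crossing].
move=> [k [a [b [c [d [[crossings_ok ends_uniq _ plane] disjoint]]]]]].
have := disjoint_crossings_le1 _ ends_uniq disjoint.
rewrite (enumerates_card lv_enum) => /(_ small).
have {}plane := eq_planar (planarizationE e a b c d) plane.
case: k a b c d crossings_ok ends_uniq plane {disjoint} => [|[|//]] a b c d
  ab_cd ends_uniq plane _.
  have const (g : 'I_0 -> V) : g = fun _ => v0.
    by apply: functional_extensionality => -[].
  move: plane; rewrite (const a) (const b) (const c) (const d).
  exact: euler_violation_not_planar
    (enumerates_sum lv_enum (enumerates_ord_list 0)) no_crossing.
have const (g : 'I_1 -> V) : g = fun _ => g ord0.
  by apply: functional_extensionality => i; rewrite (ord1 i).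
move: plane; rewrite (const a) (const b) (const c) (const d).
apply: euler_violation_not_planar (enumerates_sum lv_enum (enumerates_ord_list 1)) _.
have [_ lv_full] := lv_enum; have /andP[eab ecd] := ab_cd ord0.
have := allP (allP (allP (allP one_crossing _ (lv_full (a ord0))) _
  (lv_full (b ord0))) _ (lv_full (c ord0))) _ (lv_full (d ord0)).
by rewrite eab ecd ends_uniq.
Qed.

(* The [i]-th entry of [rot] lists, in cyclic order, the indices in [l] of the
   neighbours of the [i]-th vertex of [l]. *)
Definition rotation_of (T : eqType) (l : seq T) (rot : seq (seq nat))
    (p : T * T) : T * T :=
  (p.1, nth p.2 l (next (nth [::] rot (index p.1 l)) (index p.2 l))).

Definition join_P4_P3_vertices : seq ('I_4 + 'I_3) :=
  map inl (ord_list 4) ++ map inr (ord_list 3).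

Lemma join_P4_P3_class_C1 : class_C1 (gjoin (path_rel 4) (path_rel 3)).
Proof.
have lv_enum := enumerates_sum (enumerates_ord_list 4) (enumerates_ord_list 3).
split; first by apply: (not_C0_certificateP (v0 := inl ord0) lv_enum); vm_compute.
(* Vertices 0-3 form P4 and 4-6 form P3; the crossings 04 x 15 and 25 x 36 are
   the false vertices 7 and 8, and share the vertex 5. *)
pose v n := nth (inl ord0) join_P4_P3_vertices n.
apply: (drawing_certificateP (k := 2)
  (a := fun i => v (nth 0 [:: 0; 2] i)) (b := fun i => v (nth 0 [:: 4; 5] i))
  (c := fun i => v (nth 0 [:: 1; 3] i)) (d := fun i => v (nth 0 [:: 5; 6] i))
  (f := rotation_of (map inl join_P4_P3_vertices ++ map inr (ord_list 2))
     [:: [:: 1; 6; 5; 7]; [:: 0; 7; 4; 2; 6]; [:: 1; 4; 3; 8; 6]; [:: 2; 4; 5; 8];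
         [:: 1; 7; 5; 3; 2]; [:: 0; 6; 8; 3; 4; 7]; [:: 0; 1; 2; 8; 5];
         [:: 0; 5; 4; 1]; [:: 2; 3; 5; 6]]) lv_enum).
by vm_compute.
Qed.

Definition join_2P2_C3_vertices : seq (('I_2 + 'I_2) + 'I_3) :=
  map inl (map inl (ord_list 2) ++ map inr (ord_list 2)) ++ map inr (ord_list 3).

Lemma join_2P2_C3_class_C1 :
  class_C1 (gjoin (dunion (path_rel 2) (path_rel 2)) (cycle_rel 3)).
Proof.
have lv_enum := enumerates_sum (enumerates_sum (enumerates_ord_list 2)
  (enumerates_ord_list 2)) (enumerates_ord_list 3).
split; first by apply: (not_C0_certificateP (v0 := inl (inl ord0)) lv_enum); vm_compute.
(* Vertices 01 and 23 are the two copies of P2 and 4-6 form C3; the crossings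
   04 x 15 and 24 x 36 are the false vertices 7 and 8, and share the vertex 4. *)
pose v n := nth (inl (inl ord0)) join_2P2_C3_vertices n.
apply: (drawing_certificateP (k := 2)
  (a := fun i => v (nth 0 [:: 0; 2] i)) (b := fun i => v (nth 0 [:: 4; 4] i))
  (c := fun i => v (nth 0 [:: 1; 3] i)) (d := fun i => v (nth 0 [:: 5; 6] i))
  (f := rotation_of (map inl join_2P2_C3_vertices ++ map inr (ord_list 2))
     [:: [:: 1; 7; 5; 6]; [:: 0; 6; 4; 7]; [:: 3; 8; 6; 5]; [:: 2; 5; 4; 8];
         [:: 1; 6; 8; 3; 5; 7]; [:: 0; 7; 4; 3; 2; 6]; [:: 0; 5; 2; 8; 4; 1];
         [:: 0; 1; 4; 5]; [:: 2; 3; 4; 6]]) lv_enum).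
by vm_compute.
Qed.

Theorem lemma11 :
  class_C1 (gjoin (path_rel 4) (path_rel 3)) /\
  class_C1 (gjoin (dunion (path_rel 2) (path_rel 2)) (cycle_rel 3)).
Proof. exact: (conj join_P4_P3_class_C1 join_2P2_C3_class_C1). Qed.
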